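(* Let $K$ be a field of characteristic zero, let $G$ be a subgroup of the additive group of $K$, and let $W_G$ be the Lie algebra with basis $\{e_\alpha : \alpha \in G\}$ and bracket $[e_\alpha, e_\beta] = (\beta-\alpha)e_{\alpha+\beta}$. Then: (a) there is no decomposition of $W_G$ as a direct sum of vector spaces $W_G = A \oplus B$ with $A, B \neq 0$, $[[A,A],B] = 0$ and $[[B,B],A] = 0$; and (b) there are no nonzero subspaces $A \subseteq B$ of $W_G$ with $\dim A + \dim B = \dim W_G$, $[[A,A],B] = 0$ and $[[B,B],A] = 0$. *)

From HB Require Import structures.
From mathcomp Require Import all_boot all_order all_algebra.
From mathcomp Require Import boolp classical_sets functions cardinality fsbigop.
Set Implicit Arguments. Unset Strict Implicit. Unset Printing Implicit Defensive.
Import Order.TTheory GRing.Theory Num.Theory.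
Local Open Scope classical_set_scope.
Local Open Scope ring_scope.

Section WittG.
Variable K : fieldType.

Definition is_add_subgroup (G : set K) : Prop :=
  G 0 /\ (forall x y, G x -> G y -> G (x - y)).

(* W_G: vectors sum_alpha c_alpha e_alpha are represented by their
   coefficient functions c : K -> K, finitely supported inside G.
   e_alpha is the indicator function of alpha. *)
Definition WG (G : set K) : set (K -> K) :=
  [set f | finite_set (f @^-1` [set~ 0]) /\ (forall x, f x != 0 -> G x)].

Definition e_ (a : K) : K -> K := fun x => if x == a then 1 else 0.

(* Bracket extending [e_a, e_b] = (b - a) e_(a+b) bilinearly:
   [f,g](c) = sum_(a + b = c) f a * g b * (b - a). *)
Definition lie_bracket (f g : K -> K) : K -> K :=
  fun c => \sum_(a \in [set: K]) (f a * g (c - a) * ((c - a) - a)).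

Definition span (S : set (K -> K)) : set (K -> K) :=
  [set v | exists (n : nat) (u : 'I_n -> K -> K) (c : 'I_n -> K),
     (forall i, S (u i)) /\ (forall x, v x = \sum_(i < n) c i * u i x)].

Definition bracket_space (S T : set (K -> K)) : set (K -> K) :=
  span [set v | exists s t, S s /\ T t /\ v = lie_bracket s t].

Definition is_zero_space (S : set (K -> K)) : Prop :=
  forall v, S v -> forall x, v x = 0.

Definition nonzero_space (S : set (K -> K)) : Prop :=
  exists v, S v /\ exists x, v x != 0.

Definition subspace_of (G : set K) (A : set (K -> K)) : Prop :=
  A `<=` WG G /\ A (fun _ => 0) /\
  (forall u v, A u -> A v -> A (fun x => u x + v x)) /\
  (forall (k : K) u, A u -> A (fun x => k * u x)).

Definition lin_indep (I : Type) (b : I -> K -> K) : Prop :=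
  forall (n : nat) (idx : 'I_n -> I) (c : 'I_n -> K), injective idx ->
    (forall x, \sum_(i < n) c i * b (idx i) x = 0) -> forall i, c i = 0.

Definition is_basis (A : set (K -> K)) (I : Type) (b : I -> K -> K) : Prop :=
  (forall i, A (b i)) /\ lin_indep b /\ A `<=` span (range b).

(* dim A + dim B = dim W (cardinal arithmetic): bases of A, B, W indexed by
   IA, IB, IW with a bijection IA + IB -> IW. *)
Definition dim_sum_eq (A B W : set (K -> K)) : Prop :=
  exists (IA IB IW : Type) (bA : IA -> K -> K) (bB : IB -> K -> K)
         (bW : IW -> K -> K) (h : IA + IB -> IW),
    is_basis A bA /\ is_basis B bB /\ is_basis W bW /\ bijective h.

Definition direct_sum_decomp (G : set K) (A B : set (K -> K)) : Prop :=
  subspace_of G A /\ subspace_of G B /\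
  (forall v, A v -> B v -> forall x, v x = 0) /\
  (forall w, WG G w -> exists a b, A a /\ B b /\ forall x, w x = a x + b x).

End WittG.

From Pilot Require Import Defs.
From HB Require Import structures.
From mathcomp Require Import all_boot all_order all_algebra.
From mathcomp Require Import boolp classical_sets functions cardinality fsbigop.
From mathcomp Require Import finmap ring.
Set Implicit Arguments. Unset Strict Implicit. Unset Printing Implicit Defensive.
Import Order.TTheory GRing.Theory Num.Theory.
Local Open Scope classical_set_scope.
Local Open Scope ring_scope.

(** Since K has characteristic 0, (K,+) is torsion free and therefore carries
    a total order compatible with addition (Zorn's lemma on cones).  Comparing
    top exponents shows that the centraliser of a nonzero x in W_G is K x: if s
    and t are the top exponents of x and y, the coefficient of e_(s+t) in [x,y]
    is x_s y_t (t - s).  So if [[A,A],B] = 0 and b is a nonzero vector of B,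
    then [A,A] lies in K b; for a fixed nonzero a in A, the map s |-> [a,s]
    from A to K b has kernel K a, hence dim A <= 2.  In (a) and in (b) this
    makes W_G finite dimensional, which forces G = 0 because the e_(n g) are
    linearly independent.  But then W_G = K e_0 is a line: it is not the direct
    sum of two nonzero subspaces, and dim A + dim B >= 2 > dim W_G. *)

Section TorsionFreeOrder.
Variable V : zmodType.

Definition cone (C : set V) := ~ C 0 /\ (forall x y, C x -> C y -> C (x + y)).

Definition total_cone (P : set V) := cone P /\ forall x, x != 0 -> P x \/ P (- x).

Lemma cone_mulrn (C : set V) x n : cone C -> C x -> C (x *+ n.+1).
Proof.
move=> [_ Cadd] Cx; elim: n => [|n IHn]; first by rewrite mulr1n.
by rewrite mulrS; apply: Cadd.
Qed.

Definition cone_adjoin (C : set V) (z : V) : set V :=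
  [set y | C y \/ exists n p, (p = 0 \/ C p) /\ y = p + z *+ n.+1].

Lemma cone_adjoin_add (C : set V) z :
  (forall x y, C x -> C y -> C (x + y)) ->
  forall x y, cone_adjoin C z x -> cone_adjoin C z y -> cone_adjoin C z (x + y).
Proof.
move=> Cadd.
have C0add p q : p = 0 \/ C p -> q = 0 \/ C q -> p + q = 0 \/ C (p + q).
  by move=> [->|Cp] [->|Cq]; rewrite ?addr0 ?add0r; [left|right|right|right; apply: Cadd].
move=> x y [Cx|[n [p [Cp ->]]]] [Cy|[m [q [Cq ->]]]].
- by left; apply: Cadd.
- right; exists m, (x + q); split; last by rewrite addrA.
  exact: C0add (or_intror Cx) Cq.
- right; exists n, (p + y); split; last by rewrite addrAC.
  exact: C0add Cp (or_intror Cy).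
- right; exists (n + m.+1)%N, (p + q); split; first exact: C0add Cp Cq.
  by rewrite -addSn mulrnDr addrACA.
Qed.

Lemma total_cone_exists :
  (forall n (x : V), x != 0 -> x *+ n.+1 != 0) -> exists P, total_cone P.
Proof.
move=> torsion_free.
have [|M [Mcone Mmax]] := @Zorn_bigcup V cone.
  move=> F FC Ftot; split; first by move=> [X FX X0]; case: (FC X FX).
  move=> x y [X FX Xx] [Y FY Yy].
  have [XY|YX] := Ftot X Y FX FY.
  - by exists Y => //; apply: (FC Y FY).2 => //; apply: XY.
  - by exists X => //; apply: (FC X FX).2 => //; apply: YX.
have [M0 Madd] := Mcone.
exists M; split => // x x0; apply: contrapT => /not_orP[Mx Mnx].
(* Otherwise maximality puts [0] in both adjunctions: [p + (n+1) x = 0] and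
   [q - (m+1) x = 0] with [p, q] in [M], so [(m+1) p + (n+1) q = 0] is in [M]. *)
have adjoin0 z : ~ M z -> cone_adjoin M z 0.
  move=> Mz; apply: contrapT => adj0; apply: (Mmax (cone_adjoin M z)); last first.
    by split=> //; apply: cone_adjoin_add.
  split; first by move=> y My; left.
  by move=> sub; apply/Mz/sub; right; exists 0%N, 0; split; [left|rewrite add0r].
have [//|[n [p [[p0|Mp] e1]]]] := adjoin0 x Mx.
  by move: e1; rewrite p0 add0r => /esym/eqP; rewrite (negbTE (@torsion_free n x x0)).
have [//|[m [q [[q0|Mq] e2]]]] := adjoin0 (- x) Mnx.
  move: e2; rewrite q0 add0r mulNrn => /esym/eqP.
  by rewrite oppr_eq0 (negbTE (@torsion_free m x x0)).
apply: M0; have -> : 0 = p *+ m.+1 + q *+ n.+1.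
  have -> : p = - (x *+ n.+1) by apply/eqP; rewrite -addr_eq0 -e1.
  have -> : q = x *+ m.+1 by apply/eqP; rewrite -subr_eq0 -mulNrn -e2.
  by rewrite mulNrn -!mulrnA mulnC addNr.
by apply: Madd; apply: cone_mulrn Mcone _.
Qed.

Variable P : set V.
Hypothesis hP : total_cone P.

Definition is_top (s : seq V) (m : V) :=
  m \in s /\ forall y, y \in s -> y = m \/ P (m - y).

Lemma exists_top s : s != [::] -> exists m, is_top s m.
Proof.
have [[_ Padd] Ptot] := hP.
elim: s => [//|a s IHs] _.
have [->|/IHs [m [ms mtop]]] := eqVneq s [::].
  by exists a; split=> [|y]; rewrite ?inE // => /eqP ->; left.
suff [Hm|Ha] : (a = m \/ P (m - a)) \/ P (a - m).
- exists m; split; first by rewrite inE ms orbT.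
  by move=> y; rewrite inE => /orP[/eqP->|/mtop].
- exists a; split; first by rewrite inE eqxx.
  move=> y; rewrite inE => /orP[/eqP->|/mtop[->|Pmy]]; [by left|by right|].
  right; have -> : a - y = (a - m) + (m - y) by rewrite addrA subrK.
  exact: Padd.
have [/eqP|/Ptot[|]] := eqVneq (m - a) 0; rewrite ?opprB.
- by rewrite subr_eq0 => /eqP->; left; left.
- by left; right.
- by right.
Qed.

End TorsionFreeOrder.

Section WittAlgebra.
Variable K : fieldType.
Hypothesis hK : [pchar K] =i pred0.

Definition finite_support (f : K -> K) := finite_set (f @^-1` [set~ 0]).

Definition fsupp (f : K -> K) : {fset K} := fset_set (f @^-1` [set~ 0]).

Lemma mem_fsupp f i : finite_support f -> (i \in fsupp f) = (f i != 0).
Proof.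
by move=> ff; rewrite in_fset_set //; apply/idP/idP => [/set_mem/eqP|/eqP/mem_set].
Qed.

Lemma lie_bracketE f g c : finite_support f ->
  lie_bracket f g c = \sum_(a <- fsupp f) f a * g (c - a) * (c - a - a).
Proof.
move=> ff; rewrite /lie_bracket (fsbigTE (fsupp f)) // => a.
by rewrite mem_fsupp // negbK => /eqP ->; rewrite !mul0r.
Qed.

Lemma lie_bracketC f g c : finite_support f -> lie_bracket g f c = - lie_bracket f g c.
Proof.
move=> ff; have cK a : c - (c - a) = a by rewrite opprB addrC subrK.
rewrite /lie_bracket (reindex_fsbigT (fun a => c - a)); last by exists (fun a => c - a).
under eq_fsbigr => a _ do rewrite cK.
rewrite !(fsbigTE (fsupp f)) -?sumrN; first by apply: eq_bigr => a _; ring.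
all: by move=> a; rewrite mem_fsupp // negbK => /eqP ->; rewrite ?mulr0 ?mul0r.
Qed.

Lemma lie_bracketxx f c : finite_support f -> lie_bracket f f c = 0.
Proof.
move=> ff; apply/eqP; have /eqP := lie_bracketC f c ff.
by rewrite -subr_eq0 opprK -mulr2n -mulr_natr mulf_eq0 ((pcharf0P _).1 hK) ?orbF.
Qed.

Lemma lie_bracketBZr f g h k c : finite_support f ->
  lie_bracket f (fun t => g t - k * h t) c = lie_bracket f g c - k * lie_bracket f h c.
Proof. by move=> ff; rewrite !lie_bracketE // mulr_sumr -sumrB; apply: eq_bigr => a _; ring. Qed.

Lemma finite_supportBZ f g k : finite_support f -> finite_support g ->
  finite_support (fun t => f t - k * g t).
Proof.
move=> ff fg; have : finite_set (f @^-1` [set~ 0] `|` g @^-1` [set~ 0]) by rewrite finite_setU.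
apply: sub_finite_set => t /= fgt.
apply: contrapT => /not_orP[/contrapT ft /contrapT gt].
by apply: fgt; rewrite ft gt mulr0 subr0.
Qed.

Lemma finite_support_lie_bracket f g : finite_support f -> finite_support g ->
  finite_support (lie_bracket f g).
Proof.
move=> ff fg; apply: (sub_finite_set _ (finite_seq [seq a + b | a <- fsupp f, b <- fsupp g])).
move=> c /= fgc; apply: contrapT => c_sum; apply: fgc.
rewrite lie_bracketE //; apply: big1_seq => a /andP[_ fa].
have [->|gca] := eqVneq (g (c - a)) 0; first by rewrite mulr0 mul0r.
case: c_sum; apply/allpairsP; exists (a, c - a).
by rewrite /= fa mem_fsupp // gca addrC subrK.
Qed.

Section TopTerm.
Variable P : set K.
Hypothesis hP : total_cone P.

Lemma lie_bracket_top x y s t : finite_support x -> finite_support y ->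
  is_top P (fsupp x) s -> is_top P (fsupp y) t ->
  lie_bracket x y (s + t) = x s * y t * (t - s).
Proof.
have [[P0 Padd] _] := hP.
move=> fx fy [sx stop] [ty ttop].
rewrite lie_bracketE // (bigD1_seq s) ?fset_uniq //= [s + t]addrC addrK.
rewrite big1_seq ?addr0 // => a /andP[a_s ax].
have [->|ya] := eqVneq (y (t + s - a)) 0; first by rewrite mulr0 mul0r.
exfalso; have [/eqP|Psa] := stop a ax; first by rewrite (negbTE a_s).
have /ttop[e|Pas] : t + s - a \in fsupp y by rewrite mem_fsupp.
  by move: a_s; rewrite -(subKr (t + s) a) e addrC addKr eqxx.
apply: P0; have -> : (0 : K) = (s - a) + (t - (t + s - a)) by ring.
exact: Padd.
Qed.

End TopTerm.

Lemma exists_fsupp_top P f : total_cone P -> finite_support f ->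
  (exists c, f c != 0) -> exists s, is_top P (fsupp f) s.
Proof.
move=> hP ff [c fc]; apply: exists_top => //; apply/eqP => e.
by move: fc; rewrite -mem_fsupp // -[c \in _]/(c \in enum_fset (fsupp f)) e.
Qed.

Lemma lie_bracket_eq0_proportional x y : finite_support x -> (exists c, x c != 0) ->
  finite_support y -> (forall c, lie_bracket x y c = 0) ->
  exists k, forall t, y t = k * x t.
Proof.
move=> fx x_neq0 fy xy0.
have [P hP] : exists P : set K, total_cone P.
  apply: total_cone_exists => n z z0.
  by rewrite -mulr_natr mulf_eq0 negb_or z0 ((pcharf0P _).1 hK).
have [s [sx stop]] := exists_fsupp_top hP fx x_neq0.
pose k := y s / x s; exists k => t; apply/eqP; rewrite -subr_eq0; apply/eqP.
apply: contrapT => y't; pose y' u := y u - k * x u.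
have fy' : finite_support y' := finite_supportBZ k fy fx.
have [t' [t'y' t'top]] := exists_fsupp_top hP fy' (ex_intro _ t (introN eqP y't)).
have := lie_bracket_top hP fx fy' (conj sx stop) (conj t'y' t'top).
rewrite lie_bracketBZr // xy0 lie_bracketxx // mulr0 subr0 => /esym/eqP.
rewrite mem_fsupp // in sx; rewrite mem_fsupp // in t'y'.
rewrite !mulf_eq0 (negbTE sx) (negbTE t'y') /= subr_eq0 => /eqP t's.
by move: t'y'; rewrite t's /y' /k divfK // subrr eqxx.
Qed.

Definition in_span m (v : 'I_m -> K -> K) : set (K -> K) :=
  [set w | exists d : 'I_m -> K, forall x, w x = \sum_(j < m) d j * v j x].

Lemma in_span_lin_dep n m (u : 'I_n -> K -> K) (v : 'I_m -> K -> K) :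
  (m < n)%N -> (forall i, in_span v (u i)) ->
  exists2 z : 'I_n -> K, (exists i, z i != 0) & forall x, \sum_(i < n) z i * u i x = 0.
Proof.
move=> lt_mn /choice[D uD].
have /rowV0Pn[z /sub_kermxP zM z0] : kermx (\matrix_(i, j) D i j : 'M[K]_(n, m)) != 0.
  by rewrite -mxrank_eq0 mxrank_ker subn_eq0 -ltnNge (leq_ltn_trans (rank_leq_col _)).
exists (fun i => z 0 i).
  apply: contrapT => /forallNP zi; case/negP: z0; apply/eqP/rowP => i.
  by rewrite mxE; apply: contrapT => /eqP; apply: zi.
move=> x; under eq_bigr => i _ do rewrite uD mulr_sumr.
rewrite exchange_big big1 // => j _.
have zMj : \sum_(i < n) z 0 i * D i j = 0.
  by move/matrixP/(_ 0 j): zM; rewrite !mxE; under eq_bigr do rewrite mxE.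
under eq_bigr => i _ do rewrite mulrA.
by rewrite -mulr_suml zMj mul0r.
Qed.

Lemma lin_indep_card_le I (b : I -> K -> K) n m (idx : 'I_n -> I) (v : 'I_m -> K -> K) :
  lin_indep b -> injective idx -> (forall i, in_span v (b (idx i))) -> (n <= m)%N.
Proof.
move=> b_li idx_inj bv; rewrite leqNgt; apply/negP => lt_mn.
have [z [i zi] bz0] := in_span_lin_dep lt_mn bv.
by move: zi; rewrite (b_li _ _ z idx_inj bz0 i) eqxx.
Qed.

Lemma in_span_id m (v : 'I_m -> K -> K) j : in_span v (v j).
Proof.
exists (fun l => (l == j)%:R) => x; rewrite (bigD1 j) //= eqxx mul1r big1 ?addr0 //.
by move=> i /negbTE ->; rewrite mul0r.
Qed.

Lemma in_span0 m (v : 'I_m -> K -> K) : in_span v (fun _ => 0).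
Proof. by exists (fun _ => 0) => x; rewrite big1 // => i _; rewrite mul0r. Qed.

Lemma sub_span (S : set (K -> K)) : S `<=` Defs.span S.
Proof.
by move=> u Su; exists 1%N, (fun _ => u), (fun _ => 1); split=> // x; rewrite big_ord1 mul1r.
Qed.

Lemma span_sub_in_span (S : set (K -> K)) m (v : 'I_m -> K -> K) :
  S `<=` in_span v -> Defs.span S `<=` in_span v.
Proof.
move=> Sv w [n [u [c [Su wE]]]]; have [D uD] := choice (fun i => Sv _ (Su i)).
exists (fun j => \sum_(i < n) c i * D i j) => x; rewrite wE.
under eq_bigr => i _ do rewrite uD mulr_sumr.
rewrite exchange_big; apply: eq_bigr => j _; rewrite mulr_suml.
by apply: eq_bigr => i _; rewrite mulrA.
Qed.

Definition catv m1 m2 (v1 : 'I_m1 -> K -> K) (v2 : 'I_m2 -> K -> K) :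
  'I_(m1 + m2) -> K -> K :=
  fun l => match fintype.split l with inl i => v1 i | inr j => v2 j end.

Lemma in_span_catv m1 m2 (v1 : 'I_m1 -> K -> K) (v2 : 'I_m2 -> K -> K) w1 w2 w :
  in_span v1 w1 -> in_span v2 w2 -> (forall x, w x = w1 x + w2 x) ->
  in_span (catv v1 v2) w.
Proof.
move=> [d1 w1E] [d2 w2E] wE.
exists (fun l => match fintype.split l with inl i => d1 i | inr j => d2 j end) => x.
rewrite wE w1E w2E big_split_ord /catv; congr (_ + _); apply: eq_bigr => i _.
  by rewrite (unsplitK (inl _ i) : fintype.split (lshift m2 i) = inl i).
by rewrite (unsplitK (inr _ i) : fintype.split (rshift m1 i) = inr i).
Qed.

Lemma in_span_catl m1 m2 (v1 : 'I_m1 -> K -> K) (v2 : 'I_m2 -> K -> K) w :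
  in_span v1 w -> in_span (catv v1 v2) w.
Proof. by move=> v1w; apply: in_span_catv v1w (in_span0 v2) _ => x; rewrite addr0. Qed.

Lemma in_span_catr m1 m2 (v1 : 'I_m1 -> K -> K) (v2 : 'I_m2 -> K -> K) w :
  in_span v2 w -> in_span (catv v1 v2) w.
Proof. by move=> v2w; apply: in_span_catv (in_span0 v1) v2w _ => x; rewrite add0r. Qed.

Definition pairv (a b : K -> K) : 'I_2 -> K -> K := fun l => if l == ord0 then a else b.

Lemma in_span_pair a b mu nu w :
  (forall x, w x = mu * a x + nu * b x) -> in_span (pairv a b) w.
Proof.
move=> wE; exists (fun l => if l == ord0 then mu else nu) => x.
by rewrite big_ord_recl big_ord1 wE.
Qed.

Lemma in_span_pairv a b w : w = a \/ w = b -> in_span (pairv a b) w.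
Proof. by case=> ->; [apply: (in_span_id _ ord0) | apply: (in_span_id _ ord_max)]. Qed.

Lemma natr_inj : injective (fun n : nat => n%:R : K).
Proof.
suff le_eq i j : (i <= j)%N -> i%:R = j%:R :> K -> i = j.
  by move=> i j; case: (leqP i j) => [/le_eq//|/ltnW/le_eq h /esym/h/esym].
move=> le_ij eq_ij; apply/eqP; rewrite eqn_leq le_ij -subn_eq0 -((pcharf0P _).1 hK).
by rewrite /= natrB // eq_ij subrr.
Qed.

Lemma lin_indep_e : lin_indep (@e_ K).
Proof.
move=> n idx c idx_inj ce0 i; have := ce0 (idx i).
rewrite (bigD1 i) //= big1 => [|j ji]; first by rewrite /e_ eqxx mulr1 addr0.
by rewrite /e_ (inj_eq idx_inj) eq_sym (negbTE ji) mulr0.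
Qed.

Lemma dim_le2_of_bracket_line a r (S : set (K -> K)) :
  finite_support a -> (exists c, a c != 0) -> S `<=` finite_support ->
  (forall s, S s -> exists l, forall t, lie_bracket a s t = l * r t) ->
  exists v : 'I_2 -> K -> K, S `<=` in_span v.
Proof.
move=> fa a0 fS Sr.
have [[s0 [Ss0 [t0 as0]]]|as_eq0] :=
  pselect (exists s0, S s0 /\ exists t, lie_bracket a s0 t != 0); last first.
  exists (pairv a a) => s Ss.
  have [|k sk] := lie_bracket_eq0_proportional fa a0 (fS s Ss).
    move=> c; apply: contrapT => /eqP as_c.
    by apply: as_eq0; exists s; split=> //; exists c.
  by apply: (in_span_pair (mu := k) (nu := 0)) => x; rewrite sk mul0r addr0.
exists (pairv a s0) => s Ss.
have [l0 as0E] := Sr _ Ss0; have [l asE] := Sr _ Ss.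
have l0_neq0 : l0 != 0 by apply: contraNneq as0 => l00; rewrite as0E l00 mul0r.
have [|k Hk] := lie_bracket_eq0_proportional fa a0
  (finite_supportBZ (l / l0) (fS s Ss) (fS s0 Ss0)).
  by move=> c; rewrite lie_bracketBZr // asE as0E mulrA divfK // subrr.
by apply: (in_span_pair (mu := k) (nu := l / l0)) => x; rewrite -Hk subrK.
Qed.

Lemma double_bracket_eq0 (S T : set (K -> K)) s1 s2 t c :
  is_zero_space (bracket_space (bracket_space S S) T) ->
  S s1 -> S s2 -> T t -> lie_bracket (lie_bracket s1 s2) t c = 0.
Proof.
move=> Z Ss1 Ss2 Tt; apply: Z; apply: sub_span.
by exists (lie_bracket s1 s2), t; split=> //; apply: sub_span; exists s1, s2.
Qed.

Lemma dim_le2_of_double_bracket_eq0 (S T : set (K -> K)) s t :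
  S `<=` finite_support -> S s -> (exists c, s c != 0) ->
  T t -> finite_support t -> (exists c, t c != 0) ->
  is_zero_space (bracket_space (bracket_space S S) T) ->
  exists v : 'I_2 -> K -> K, S `<=` in_span v.
Proof.
move=> fS Ss s0 Tt ft t0 Z.
apply: (dim_le2_of_bracket_line (r := t) (fS _ Ss) s0 fS) => s' Ss'.
have fss' := finite_support_lie_bracket (fS _ Ss) (fS _ Ss').
apply: (lie_bracket_eq0_proportional ft t0 fss') => c.
by rewrite lie_bracketC // (double_bracket_eq0 _ Z Ss Ss' Tt) oppr0.
Qed.

Variable G : set K.
Hypothesis hG : is_add_subgroup G.

Lemma natr_mul_in_G g (i : nat) : G g -> G (i%:R * g).
Proof.
have [G0 GB] := hG; move=> Gg; elim: i => [|i IHi]; first by rewrite mul0r.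
have -> : i.+1%:R * g = i%:R * g - (0 - g) by rewrite -addn1 natrD; ring.
exact: GB _ _ IHi (GB _ _ G0 Gg).
Qed.

Lemma e_WG a : G a -> WG G (e_ a).
Proof.
move=> Ga; split=> [|x]; last by rewrite /e_; case: ifP => [/eqP-> _|_]; rewrite ?eqxx.
apply: (sub_finite_set _ (finite_set1 a)) => x /=.
by rewrite /e_; case: eqP => // _ /(_ erefl).
Qed.

Lemma WG_in_span_trivial m (v : 'I_m -> K -> K) :
  WG G `<=` in_span v -> forall g, G g -> g = 0.
Proof.
move=> Wv g Gg; apply: contrapT => /eqP g0.
have idx_inj : injective (fun i : 'I_m.+1 => i%:R * g).
  by move=> i j /(mulIf g0)/natr_inj/val_inj.
have e_in_span i := Wv _ (e_WG (natr_mul_in_G i Gg)).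
by have := lin_indep_card_le lin_indep_e idx_inj e_in_span; rewrite ltnn.
Qed.

Lemma WG_trivial_eq : (forall g, G g -> g = 0) ->
  forall w, WG G w -> forall x, w x = w 0 * e_ 0 x.
Proof.
move=> G0 w [_ wG] x; rewrite /e_; case: eqP => [->|x0]; first by rewrite mulr1.
by rewrite mulr0; apply: contrapT => /eqP/wG/G0.
Qed.

Lemma at_most_two (I : Type) (i0 : I) :
  (forall idx : 'I_3 -> I, ~ injective idx) -> exists i1, forall i, i = i0 \/ i = i1.
Proof.
move=> no3; have [[i1 i10]|all_i0] := pselect (exists i1, i1 <> i0); last first.
  by exists i0 => i; left; apply: contrapT => ii0; apply: all_i0; exists i.
exists i1 => i; apply: contrapT => /not_orP[ii0 ii1].
apply: (no3 (fun k : 'I_3 => nth i0 [:: i0; i1; i] k)).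
by move=> [[|[|[|?]]] ?] [[|[|[|?]]] ?] //= e; apply: val_inj => //=; exfalso; congruence.
Qed.

Lemma is_basis_inhabited (S : set (K -> K)) I (b : I -> K -> K) :
  is_basis S b -> nonzero_space S -> inhabited I.
Proof.
move=> [_ [_ Sb]] [s [Ss [x sx]]].
have [[|n] [u [c [ub sE]]]] := Sb s Ss.
  by move: sx; rewrite sE big_ord0 eqxx.
by have [i _ _] := ub ord0; exact: inhabits i.
Qed.

Lemma WG_no_direct_sum_double_bracket_eq0 (A B : set (K -> K)) :
  direct_sum_decomp G A B -> nonzero_space A -> nonzero_space B ->
  is_zero_space (bracket_space (bracket_space A A) B) ->
  is_zero_space (bracket_space (bracket_space B B) A) -> False.
Proof.
move=> [[AW [_ [_ AZ]]] [[BW [_ [_ BZ]]] [AB0 AB_W]]] [a [Aa a0]] [b [Bb b0]] ZA ZB.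
have fA : A `<=` finite_support by move=> w /AW[].
have fB : B `<=` finite_support by move=> w /BW[].
have [vA AvA] := dim_le2_of_double_bracket_eq0 fA Aa a0 Bb (fB _ Bb) b0 ZA.
have [vB BvB] := dim_le2_of_double_bracket_eq0 fB Bb b0 Aa (fA _ Aa) a0 ZB.
have G0 : forall g, G g -> g = 0.
  apply: (@WG_in_span_trivial _ (catv vA vB)) => w /AB_W[a' [b' [Aa' [Bb' wE]]]].
  exact: in_span_catv (AvA _ Aa') (BvB _ Bb') wE.
(* Hence [W_G = K e_0], and [b 0 * a = a 0 * b] is a nonzero vector of both [A] and [B]. *)
have aE := WG_trivial_eq G0 (AW _ Aa); have bE := WG_trivial_eq G0 (BW _ Bb).
have a00 : a 0 != 0 by case: a0 => x; rewrite (aE x) mulf_eq0 negb_or => /andP[].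
have b00 : b 0 != 0 by case: b0 => x; rewrite (bE x) mulf_eq0 negb_or => /andP[].
have AB_eq : (fun x => b 0 * a x) = (fun x => a 0 * b x).
  by apply: funext => x; rewrite (aE x) (bE x) mulrCA.
have := AB0 _ (AZ (b 0) a Aa); rewrite AB_eq => /(_ (BZ (a 0) b Bb) 0)/eqP.
by rewrite mulf_eq0 (negbTE a00) (negbTE b00).
Qed.

Lemma WG_no_nested_double_bracket_eq0 (A B : set (K -> K)) :
  B `<=` WG G -> A `<=` B -> nonzero_space A -> dim_sum_eq A B (WG G) ->
  is_zero_space (bracket_space (bracket_space B B) A) -> False.
Proof.
move=> BW AB nA [IA [IB [IW [bA [bB [bW [h]]]]]]].
move=> [bAs [bBs [[bW_W [bW_li bW_span]] h_bij]]] ZB.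
have [a [Aa a0]] := nA; have Ba := AB _ Aa.
have fB : B `<=` finite_support by move=> w /BW[].
have [v Bv] := dim_le2_of_double_bracket_eq0 fB Ba a0 Aa (fB _ Ba) a0 ZB.
have no3 I (b : I -> K -> K) : lin_indep b -> (forall i, B (b i)) ->
    forall idx : 'I_3 -> I, ~ injective idx.
  move=> b_li Bb idx idx_inj.
  by have := lin_indep_card_le b_li idx_inj (fun i => Bv _ (Bb (idx i))).
have [iA] := is_basis_inhabited bAs nA.
have [iB] := is_basis_inhabited bBs (ex_intro _ a (conj Ba a0)).
have [iA' IAE] := at_most_two iA (no3 _ _ bAs.2.1 (fun i => AB _ (bAs.1 i))).
have [iB' IBE] := at_most_two iB (no3 _ _ bBs.2.1 bBs.1).
(* [IW] has at most four elements, so [W_G] is finite dimensional. *)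
have G0 : forall g, G g -> g = 0.
  pose vW := catv (pairv (bW (h (inl iA))) (bW (h (inl iA'))))
                  (pairv (bW (h (inr iB))) (bW (h (inr iB')))).
  apply: (@WG_in_span_trivial _ vW) => w /bW_span; apply: span_sub_in_span.
  move=> _ [k _ <-]; have [h' _ hh'] := h_bij; rewrite -(hh' k).
  case: (h' k) => i; [apply: in_span_catl | apply: in_span_catr]; apply: in_span_pairv.
    by case: (IAE i) => ->; [left | right].
  by case: (IBE i) => ->; [left | right].
have W_line w : WG G w -> in_span (fun _ : 'I_1 => e_ 0) w.
  by move=> Ww; exists (fun _ => w 0) => x; rewrite big_ord1 (WG_trivial_eq G0 Ww).
pose idx (l : 'I_2) := h (if l == ord0 then inl iA else inr iB).
have idx_inj : injective idx.
  by move=> [[|[|?]] ?] [[|[|?]] ?] //= /(bij_inj h_bij) // _; apply: val_inj.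
by have := lin_indep_card_le bW_li idx_inj (fun l => W_line _ (bW_W (idx l))).
Qed.

End WittAlgebra.

Theorem proposition3p2 (K : fieldType) (hK : [pchar K] =i pred0)
  (G : set K) (hG : is_add_subgroup G) :
  (~ exists A B : set (K -> K),
       direct_sum_decomp G A B /\ nonzero_space A /\ nonzero_space B /\
       is_zero_space (bracket_space (bracket_space A A) B) /\
       is_zero_space (bracket_space (bracket_space B B) A)) /\
  (~ exists A B : set (K -> K),
       subspace_of G A /\ subspace_of G B /\ A `<=` B /\
       nonzero_space A /\ nonzero_space B /\
       dim_sum_eq A B (WG G) /\
       is_zero_space (bracket_space (bracket_space A A) B) /\
       is_zero_space (bracket_space (bracket_space B B) A)).
Proof.
split=> [[A [B [AB [nA [nB [ZA ZB]]]]]]|[A [B [_ [[BW _] [AB [nA [_ [dim [_ ZB]]]]]]]]]].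
  exact: (WG_no_direct_sum_double_bracket_eq0 hK hG AB nA nB ZA ZB).
exact: (WG_no_nested_double_bracket_eq0 hK hG BW AB nA dim ZB).
Qed.
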